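(* Let $C\subseteq(\mathbb{N}\cup\{\infty\})^d$ be semi-linear and $D\subseteq\{1,\dots,d\}$. Let $C_D\subseteq\mathbb{N}^d$ be the set obtained from $C$ by (1) removing every vector $(v_1,\dots,v_d)$ with $v_i=\infty$ for some $i\notin D$, and then (2) as long as the set contains a vector $(v_1,\dots,v_d)$ with $v_i=\infty$ for some $i$, replacing it by all vectors $(v_1,\dots,v_{i-1},z,v_{i+1},\dots,v_d)$ with $z\in\mathbb{N}$. (Equivalently, $C_D$ is the set of $\mathbf{u}\in\mathbb{N}^d$ for which there is $\mathbf{v}\in C$ with $v_i=\infty$ only for $i\in D$ and $u_i=v_i$ whenever $v_i\neq\infty$.) Then $C_D$ is semi-linear.
   Context: A linear set over $(\mathbb{N}\cup\{\infty\})^d$ is a set $\{b_0+b_1z_1+\dots+b_\ell z_\ell\mid z_1,\dots,z_\ell\in\mathbb{N}\}$ with $b_0,\dots,b_\ell\in(\mathbb{N}\cup\{\infty\})^d$, with componentwise arithmetic where $z+\infty=\infty+z=\infty+\infty=\infty$, $z\cdot\infty=\infty\cdot z=\infty$ for $z>0$, and $0\cdot\infty=\infty\cdot0=0$. A semi-linear set is a finite union of linear sets; for subsets of $\mathbb{N}^d$ this means all $b_j\in\mathbb{N}^d$. *)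

From mathcomp Require Import all_boot.
Set Implicit Arguments. Unset Strict Implicit. Unset Printing Implicit Defensive.

(* N ∪ {∞}: [Some n] is the natural number n, [None] is ∞. *)
Definition enat := option nat.

Definition eadd (x y : enat) : enat :=
  match x, y with Some a, Some b => Some (a + b) | _, _ => None end.

Definition emul (z : nat) (x : enat) : enat :=
  match x with
  | Some a => Some (z * a)
  | None => if z == 0 then Some 0 else None
  end.

Definition evec (d : nat) := 'I_d -> enat.
Definition nvec (d : nat) := 'I_d -> nat.

Definition ecomb d (b0 : evec d) l (b : 'I_l -> evec d) (z : 'I_l -> nat) : evec d :=
  fun i => eadd (b0 i) (foldr eadd (Some 0) [seq emul (z j) (b j i) | j <- enum 'I_l]).

Definition elinear_set d (b0 : evec d) l (b : 'I_l -> evec d) : evec d -> Prop :=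
  fun v => exists z : 'I_l -> nat, v = ecomb b0 b z.

Definition esemilinear d (S : evec d -> Prop) : Prop :=
  exists (m : nat) (B0 : 'I_m -> evec d) (L : 'I_m -> nat)
         (B : forall k : 'I_m, 'I_(L k) -> evec d),
    forall v, S v <-> exists k : 'I_m, elinear_set (B0 k) (B k) v.

Definition ncomb d (b0 : nvec d) l (b : 'I_l -> nvec d) (z : 'I_l -> nat) : nvec d :=
  fun i => b0 i + \sum_(j < l) z j * b j i.

Definition nlinear_set d (b0 : nvec d) l (b : 'I_l -> nvec d) : nvec d -> Prop :=
  fun u => exists z : 'I_l -> nat, u = ncomb b0 b z.

Definition nsemilinear d (S : nvec d -> Prop) : Prop :=
  exists (m : nat) (B0 : 'I_m -> nvec d) (L : 'I_m -> nat)
         (B : forall k : 'I_m, 'I_(L k) -> nvec d),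
    forall u, S u <-> exists k : 'I_m, nlinear_set (B0 k) (B k) u.

Definition CD d (C : evec d -> Prop) (D : {set 'I_d}) : nvec d -> Prop :=
  fun u => exists v, C v /\ (forall i, v i = None -> i \in D) /\
                     (forall i n, v i = Some n -> u i = n).

From mathcomp Require Import all_boot.
From Stdlib Require Import Setoid FunctionalExtensionality.
Set Implicit Arguments. Unset Strict Implicit. Unset Printing Implicit Defensive.

(* Split the linear set {b0 + sum_j b_j z_j} according to the support
   S = {j | z_j > 0} of the coefficients.  For fixed S the infinite coordinates
   are those where b0 or some b_j with j in S is infinite; they do not depend on
   z.  If they all lie in D, the vectors of C_D arising from support S form a
   linear subset of N^d: on the finite coordinates they are
   b0 + sum_(j in S) b_j + sum_(j in S) b_j z'_j with z' arbitrary, and every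
   infinite coordinate becomes a free natural number, i.e. a unit-vector
   generator. *)

Definition nlin_data d := {l : nat & (nvec d * ('I_l -> nvec d))%type}.

Definition nlinear_of d (x : nlin_data d) : nvec d -> Prop :=
  nlinear_set (tagged x).1 (tagged x).2.

Lemma nsemilinearP d (S : nvec d -> Prop) :
  nsemilinear S <->
  exists m (f : 'I_m -> nlin_data d), forall u, S u <-> exists k, nlinear_of (f k) u.
Proof.
split.
- case=> m [B0 [L [B HS]]].
  by exists m, (fun k => existT _ (L k) (B0 k, B k)).
- case=> m [f Hf].
  by exists m, (fun k => (tagged (f k)).1), (fun k => tag (f k)), (fun k => (tagged (f k)).2).
Qed.

Lemma nsemilinear_ext d (S T : nvec d -> Prop) :
  nsemilinear S -> (forall u, S u <-> T u) -> nsemilinear T.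
Proof. by move=> [m [B0 [L [B HS]]]] ST; exists m, B0, L, B => u; rewrite -ST. Qed.

Lemma nsemilinear0 {d} : nsemilinear (fun _ : nvec d => False).
Proof.
by exists 0, (fun=> fun=> 0), (fun=> 0), (fun=> fun=> fun=> 0) => u; split=> // [[[]]].
Qed.

Lemma nsemilinearU d (S T : nvec d -> Prop) :
  nsemilinear S -> nsemilinear T -> nsemilinear (fun u => S u \/ T u).
Proof.
move=> /nsemilinearP [m [f Hf]] /nsemilinearP [n [g Hg]]; apply/nsemilinearP.
exists (m + n), (fun k => match split k with inl a => f a | inr b => g b end) => u.
rewrite Hf Hg; split.
- by case=> [[a Ha] | [b Hb]]; [exists (unsplit (inl a)) | exists (unsplit (inr b))];
    rewrite unsplitK.
- by case=> k; case: (split k) => [a|b] H; [left; exists a | right; exists b].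
Qed.

Lemma nsemilinear_big_union d (I : eqType) (r : seq I) (P : I -> nvec d -> Prop) :
  (forall i, i \in r -> nsemilinear (P i)) ->
  nsemilinear (fun u => exists2 i, i \in r & P i u).
Proof.
elim: r => [_ | i r IHr HP].
  by apply: (nsemilinear_ext nsemilinear0) => u; split=> // [[]].
apply: (nsemilinear_ext (nsemilinearU (HP i (mem_head i r)) (IHr _))) => [j jr | u].
  by apply: HP; rewrite in_cons jr orbT.
split=> [[Hu | [j jr Hu]] | [j]]; first by exists i; rewrite ?mem_head.
  by exists j; rewrite // in_cons jr orbT.
by rewrite in_cons => /orP [/eqP -> | jr] Hu; [left | right; exists j].
Qed.

Definition nlinear_set_fin d (T : finType) (b0 : nvec d) (b : T -> nvec d) (u : nvec d) :=
  exists z : T -> nat, u = fun i => b0 i + \sum_t z t * b t i.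

Lemma nsemilinear_nlinear_set_fin d (T : finType) (b0 : nvec d) (b : T -> nvec d) :
  nsemilinear (nlinear_set_fin b0 b).
Proof.
apply/nsemilinearP; exists 1, (fun=> existT _ #|T| (b0, fun j => b (enum_val j))) => u.
split=> [[z ->] | [_ [z ->]]].
- exists ord0, (fun j => z (enum_val j)); apply: functional_extensionality => i.
  by rewrite /ncomb /= (big_enum_val (A := predT)).
- exists (fun t => z (enum_rank t)); apply: functional_extensionality => i.
  rewrite /ncomb /= [in RHS](big_enum_val (A := predT)) /=.
  by congr (_ + _); apply: eq_bigr => j _; rewrite enum_valK.
Qed.

Lemma foldr_eadd (s : seq enat) :
  foldr eadd (Some 0) s = if None \in s then None else Some (\sum_(x <- s) odflt 0 x).
Proof.
elim: s => [|[a|] s IHs]; rewrite ?big_nil ?big_cons ?in_cons //= IHs.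
by case: (None \in s).
Qed.

Lemma emul_eq_None z x : (emul z x == None) = (0 < z) && (x == None).
Proof. by case: x => [a|] //=; case: z. Qed.

Lemma odflt_emul z x : odflt 0 (emul z x) = z * odflt 0 x.
Proof. by case: x => [a|] //=; rewrite muln0; case: (z == 0). Qed.

Definition supp n (z : 'I_n -> nat) : {set 'I_n} := [set j | 0 < z j].

Section ELinearSet.

Variables (d l : nat) (b0 : evec d) (b : 'I_l -> evec d).

Definition inf_coords (S : {set 'I_l}) : {set 'I_d} :=
  [set i | (b0 i == None) || [exists j in S, b j i == None]].

Lemma ecomb_val z i :
  ecomb b0 b z i =
  if i \in inf_coords (supp z) then None
  else Some (odflt 0 (b0 i) + \sum_(j in supp z) z j * odflt 0 (b j i)).
Proof.
have infE : (None \in [seq emul (z j) (b j i) | j <- enum 'I_l]) =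
            [exists j in supp z, b j i == None].
  apply/mapP/existsP => [[j _ /esym/eqP] | [j /andP [+ bj]]].
    by rewrite emul_eq_None => /andP [zj bj]; exists j; rewrite inE zj.
  rewrite inE => zj; exists j; rewrite ?mem_enum //.
  by apply/esym/eqP; rewrite emul_eq_None zj.
have sumE : \sum_(x <- [seq emul (z j) (b j i) | j <- enum 'I_l]) odflt 0 x =
            \sum_(j in supp z) z j * odflt 0 (b j i).
  rewrite big_map [RHS]big_mkcond -big_enum; apply: eq_bigr => j _.
  by rewrite odflt_emul inE; case: (z j).
rewrite /ecomb foldr_eadd infE sumE inE.
by case: (b0 i) => [a|] //=; case: [exists _ in _, _].
Qed.

Definition fin_base (S : {set 'I_l}) : nvec d := fun i =>
  if i \in inf_coords S then 0 else odflt 0 (b0 i) + \sum_(j in S) odflt 0 (b j i).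

Definition fin_gen (S : {set 'I_l}) (t : 'I_l + 'I_d) : nvec d := fun i =>
  match t with
  | inl j => if (j \in S) && (i \notin inf_coords S) then odflt 0 (b j i) else 0
  | inr k => (k \in inf_coords S) && (i == k)
  end.

Lemma fin_base_gen_val S (z : 'I_l + 'I_d -> nat) i :
  fin_base S i + \sum_t z t * fin_gen S t i =
  if i \in inf_coords S then z (inr i)
  else odflt 0 (b0 i) + \sum_(j in S) (z (inl j)).+1 * odflt 0 (b j i).
Proof.
rewrite /fin_base big_sumType /=; case: ifP => Hi /=.
  rewrite big1 ?add0n => [|j _]; last by rewrite andbF muln0.
  rewrite (bigD1 i) //= Hi eqxx muln1 big1 ?addn0 // => k /negbTE ki.
  by rewrite eq_sym ki andbF muln0.
rewrite [\sum_(k < d) _]big1 => [|k _]; last first.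
  by case: eqP => [<-|]; rewrite ?Hi ?andbF ?andbT muln0.
rewrite addn0 -addnA big_mkcond [in RHS]big_mkcond -big_split /=.
congr (_ + _); apply: eq_bigr => j _.
by case: (j \in S); rewrite /= ?muln0.
Qed.

Lemma CD_elinear_setE (D : {set 'I_d}) u :
  CD (elinear_set b0 b) D u <->
  exists2 S, inf_coords S \subset D & nlinear_set_fin (fin_base S) (fin_gen S) u.
Proof.
split.
- case=> _ [[z ->] [Hinf Hfin]]; exists (supp z).
    by apply/subsetP => i Hi; apply: Hinf; rewrite ecomb_val Hi.
  exists (fun t => match t with inl j => (z j).-1 | inr k => u k end).
  apply: functional_extensionality => i; rewrite fin_base_gen_val; case: ifP => // Hi.
  apply: Hfin; rewrite ecomb_val Hi; congr (Some (_ + _)).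
  by apply: eq_bigr => j; rewrite inE => /prednK ->.
- case=> S HSD [z' ->].
  pose z j := if j \in S then (z' (inl j)).+1 else 0.
  have supp_z : supp z = S by apply/setP => j; rewrite inE /z; case: (j \in S).
  exists (ecomb b0 b z); split; first by exists z.
  split=> [i | i n]; rewrite ecomb_val supp_z; first by case: ifP => // /(subsetP HSD).
  rewrite fin_base_gen_val; case: ifP => // _ [<-]; congr (_ + _).
  by apply: eq_bigr => j jS; rewrite /z jS.
Qed.

Lemma nsemilinear_CD_elinear_set (D : {set 'I_d}) : nsemilinear (CD (elinear_set b0 b) D).
Proof.
have := nsemilinear_big_union (r := enum [pred S | inf_coords S \subset D])
          (fun S _ => nsemilinear_nlinear_set_fin (fin_base S) (fin_gen S)).
move/nsemilinear_ext; apply=> u; rewrite CD_elinear_setE.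
by split=> [] [S HS Hu]; exists S; rewrite ?mem_enum in HS *.
Qed.

End ELinearSet.

Theorem lemma6 (d : nat) (C : evec d -> Prop) (D : {set 'I_d}) :
  esemilinear C -> nsemilinear (CD C D).
Proof.
case=> m [B0 [L [B HC]]].
have := nsemilinear_big_union (r := enum 'I_m)
          (fun k _ => nsemilinear_CD_elinear_set (B0 k) (B k) D).
move/nsemilinear_ext; apply=> u; split.
- by case=> k _ [v [Hv HvD]]; exists v; split=> //; apply/HC; exists k.
- by case=> v [/HC [k Hk] HvD]; exists k; [rewrite mem_enum | exists v].
Qed.
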